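(* Let $H$ be a graph such that $L(H)$ has a $K_t$-immersion. Then for every integer $m\geq 2$, the line graph $L(mH)$ has a $K_{mt}$-immersion.
   Context: Graphs are finite and may have parallel edges but no loops. The line graph $L(H)$ of a graph $H$ is the simple graph whose vertex set is $E(H)$, in which two distinct edges of $H$ are adjacent iff they share at least one endpoint (so parallel edges of $H$ are adjacent in $L(H)$). For $m\geq 2$, $mH$ denotes the graph obtained from $H$ by replacing each edge $e$ by $m$ parallel copies of $e$. A graph $G$ has a $K_t$-immersion if there is an injective map $\phi$ from the vertex set of $K_t$ to $V(G)$ and, for each pair $u\neq v$ of vertices of $K_t$, a path in $G$ joining $\phi(u)$ and $\phi(v)$, such that these $\binom{t}{2}$ paths are pairwise edge-disjoint (equivalently, $K_t$ can be obtained from a subgraph of $G$ by repeatedly splitting off pairs of adjacent edges and deleting isolated vertices). *)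

From mathcomp Require Import all_boot.
Set Implicit Arguments. Unset Strict Implicit. Unset Printing Implicit Defensive.

(* A (loopless multi)graph H is given by finite types V (vertices), E (edges)
   and an endpoint map ends : E -> V * V with (ends e).1 != (ends e).2.
   Parallel edges = distinct edges with the same endpoints. *)

Definition loopless (V E : finType) (ends : E -> V * V) : Prop :=
  forall e, (ends e).1 != (ends e).2.

Definition incident (V E : finType) (ends : E -> V * V) (e : E) (v : V) : bool :=
  (v == (ends e).1) || (v == (ends e).2).

Definition line_adj (V E : finType) (ends : E -> V * V) : rel E :=
  fun e f => (e != f) && [exists v, incident ends e v && incident ends f v].

(* mH: each edge e replaced by m parallel copies (e, i), i < m. *)
Definition mult_ends (m : nat) (V E : finType) (ends : E -> V * V)
  : E * 'I_m -> V * V := fun p => ends p.1.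

Definition is_path (T : finType) (adj : rel T) (x y : T) (p : seq T) : Prop :=
  [/\ path adj x p, last x p = y & uniq (x :: p)].

Definition path_steps (T : finType) (x : T) (p : seq T) : seq (T * T) :=
  zip (x :: p) p.

Definition edge_disjoint (T : finType) (x : T) (p : seq T) (x' : T) (p' : seq T)
  : Prop :=
  forall a b, (a, b) \in path_steps x p ->
    ((a, b) \notin path_steps x' p') && ((b, a) \notin path_steps x' p').

Definition has_K_immersion (T : finType) (adj : rel T) (t : nat) : Prop :=
  exists phi : 'I_t -> T, injective phi /\
  exists P : 'I_t -> 'I_t -> seq T,
    (forall u v : 'I_t, u < v -> is_path adj (phi u) (phi v) (P u v)) /\
    (forall u v u' v' : 'I_t, u < v -> u' < v' -> (u, v) != (u', v') ->
        edge_disjoint (phi u) (P u v) (phi u') (P u' v')).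
Arguments mult_ends m {V E} ends _.

From mathcomp Require Import all_boot ssralg zmodp zify.
Import GRing.Theory.
Set Implicit Arguments. Unset Strict Implicit. Unset Printing Implicit Defensive.

(* Vertex (u, i) of K_(m t) is sent to the i-th copy of the edge phi u of H.
   Two copies of the same edge are adjacent in L(mH), which joins vertices
   within a block. For u < v, the path e_0 ... e_k of L(H) from phi u to
   phi v is lifted to L(mH) by taking at position l the copy labelled
   i, i + j, j, i + j, ..., j (labels in Z/m, ending with j); consecutive
   labels of such a lifting determine (i, j), and a step of the lifted path
   determines its position on the base path, so liftings of one base path are
   edge-disjoint, while liftings of different base paths project to
   edge-disjoint paths. Block-internal steps stay on one edge of H, lifted
   steps never do. *)

Definition same_edge (T : Type) (s s' : T * T) : Prop := s' = s \/ s' = (s.2, s.1).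

Lemma same_edge_map (T U : Type) (f : T -> U) (s s' : T * T) :
  same_edge s s' -> same_edge (f s.1, f s.2) (f s'.1, f s'.2).
Proof. by case=> ->; [left | right]. Qed.

Lemma same_edge_eq (T : eqType) (s s' : T * T) :
  same_edge s s' -> (s.1 == s.2) = (s'.1 == s'.2).
Proof. by case=> -> //=; rewrite eq_sym. Qed.

Section PathSteps.
Variables (T : finType) (x : T) (p : seq T).

Lemma size_path_steps : size (path_steps x p) = size p.
Proof. by rewrite size_zip /= (minn_idPr (leqnSn _)). Qed.

Lemma nth_path_steps l : l < size p ->
  nth (x, x) (path_steps x p) l = (nth x (x :: p) l, nth x (x :: p) l.+1).
Proof. by move=> lt_lp; rewrite nth_zip_cond size_path_steps lt_lp. Qed.

Lemma path_stepsP s : s \in path_steps x p ->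
  exists2 l, l < size p & s = (nth x (x :: p) l, nth x (x :: p) l.+1).
Proof.
move=> /(nthP (x, x)) [l]; rewrite size_path_steps => lt_lp <-.
by exists l; rewrite // nth_path_steps.
Qed.

Lemma mem_path_steps l : l < size p ->
  (nth x (x :: p) l, nth x (x :: p) l.+1) \in path_steps x p.
Proof. by move=> lt_lp; rewrite -nth_path_steps // mem_nth ?size_path_steps. Qed.

Lemma edge_disjointE (x' : T) (p' : seq T) :
  edge_disjoint x p x' p' <->
  (forall s s', s \in path_steps x p -> s' \in path_steps x' p' -> ~ same_edge s s').
Proof.
split=> [disj [a b] s' /disj /andP[ab_new ba_new] s'_in [s'E | s'E] |].
- by rewrite -s'E s'_in in ab_new.
- by rewrite -s'E s'_in in ba_new.
move=> disj a b ab_in; apply/andP; split; apply/negP => s'_in.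
- by apply: disj ab_in s'_in _; left.
- by apply: disj ab_in s'_in _; right.
Qed.

Lemma path_steps_neq s : uniq (x :: p) -> s \in path_steps x p -> s.1 != s.2.
Proof.
move=> uniq_p /path_stepsP[l lt_lp ->].
rewrite [_ != _]/(nth x (x :: p) l != nth x (x :: p) l.+1) nth_uniq //=.
- by rewrite eqn_leq ltnn andbF.
- exact: ltnW.
Qed.

End PathSteps.

Section LabelPath.
Variables (E Z : finType) (x : E) (p : seq E).

Definition label_path (lab : nat -> Z) : seq (E * Z) :=
  mkseq (fun l => (nth x p l, lab l.+1)) (size p).

Lemma size_label_path lab : size (label_path lab) = size p.
Proof. exact: size_mkseq. Qed.

Lemma nth_label_path lab d l : l <= size p ->
  nth d ((x, lab 0) :: label_path lab) l = (nth x (x :: p) l, lab l).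
Proof. by case: l => [|l] //= lt_lp; rewrite nth_mkseq. Qed.

Lemma label_path_stepsP lab s :
  s \in path_steps (x, lab 0) (label_path lab) ->
  exists2 l, l < size p &
    s = ((nth x (x :: p) l, lab l), (nth x (x :: p) l.+1, lab l.+1)).
Proof.
move=> /path_stepsP[l]; rewrite size_label_path => lt_lp ->.
by exists l; rewrite // !nth_label_path // ltnW.
Qed.

Lemma label_path_is_path (adj : rel E) (adj' : rel (E * Z)) y lab :
  (forall e f a b, adj e f -> adj' (e, a) (f, b)) ->
  is_path adj x y p -> is_path adj' (x, lab 0) (y, lab (size p)) (label_path lab).
Proof.
move=> adj_lift [adj_p last_p uniq_p]; split.
- apply/(pathP (x, lab 0)) => l; rewrite size_label_path => lt_lp.
  rewrite nth_label_path ?(ltnW lt_lp) // /label_path nth_mkseq //.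
  by apply: adj_lift; apply: (pathP x adj_p).
- rewrite (last_nth (x, lab 0)) size_label_path nth_label_path //.
  by rewrite -last_nth last_p.
- apply: (@map_uniq _ _ fst); rewrite /= /label_path /mkseq -map_comp.
  by rewrite [map _ _](mkseq_nth x p).
Qed.

Lemma label_path_steps_fst lab s :
  s \in path_steps (x, lab 0) (label_path lab) -> (s.1.1, s.2.1) \in path_steps x p.
Proof. by move=> /label_path_stepsP[l lt_lp ->]; apply: mem_path_steps. Qed.

(* Along a path without repeated vertices, an edge is traversed at most once
   and never backwards, so matching steps of two liftings sit at the same
   position. *)
Lemma label_path_same_edge lab lab' s s' : uniq (x :: p) ->
  s \in path_steps (x, lab 0) (label_path lab) ->
  s' \in path_steps (x, lab' 0) (label_path lab') -> same_edge s s' ->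
  exists2 l, l < size p & lab l = lab' l /\ lab l.+1 = lab' l.+1.
Proof.
move=> uniq_p /label_path_stepsP[l lt_lp ->] /label_path_stepsP[l' lt_l'p ->].
have nth_inj i j : nth x (x :: p) i = nth x (x :: p) j ->
    i <= size p -> j <= size p -> i = j.
  by move=> /eqP + ? ?; rewrite nth_uniq // => /eqP.
case=> -[e_vx e_lab e_vy e_labS].
- have l'l : l' = l by apply: (nth_inj l' l) => //; apply: ltnW.
  by exists l; rewrite // -e_lab -e_labS l'l.
- have := nth_inj l' l.+1 e_vx (ltnW lt_l'p) lt_lp.
  by have := nth_inj l'.+1 l e_vy lt_l'p (ltnW lt_lp); lia.
Qed.

End LabelPath.

Section AlternatingLabel.
Variable Z : zmodType.
Local Open Scope ring_scope.

(* Position 0 carries [i]; the later positions alternate between [i + j] and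
   [j], ending with [j] at position [k]. Any two consecutive labels thus
   determine [(i, j)]. *)
Definition alternating_label (k : nat) (i j : Z) (l : nat) : Z :=
  if l == 0%N then i else if odd (k - l) then i + j else j.

Lemma alternating_label_last k i j : (0 < k)%N -> alternating_label k i j k = j.
Proof. by rewrite /alternating_label subnn; case: k. Qed.

Lemma alternating_label_inj k i j i' j' l : (l < k)%N ->
  alternating_label k i j l = alternating_label k i' j' l ->
  alternating_label k i j l.+1 = alternating_label k i' j' l.+1 ->
  i = i' /\ j = j'.
Proof.
rewrite /alternating_label /= => lt_lk; rewrite -(subnSK lt_lk) /=.
case: l lt_lk => [|l] _ /=.
  by move=> <-; case: ifP => // _ /addrI.
by case: odd => /= [-> /addIr | /[swap] -> /addIr].
Qed.

End AlternatingLabel.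

Lemma line_adj_mult (V E : finType) (ends : E -> V * V) m e f (a b : 'I_m) :
  line_adj ends e f -> line_adj (mult_ends m ends) (e, a) (f, b).
Proof.
by case/andP=> ne_ef ex; apply/andP; split=> //; apply: contra ne_ef => /eqP[->].
Qed.

Lemma line_adj_copies (V E : finType) (ends : E -> V * V) m e (a b : 'I_m) :
  a != b -> line_adj (mult_ends m ends) (e, a) (e, b).
Proof.
move=> ne_ab; apply/andP; split; first by apply: contra ne_ab => /eqP[->].
by apply/existsP; exists (ends e).1; rewrite /incident /mult_ends /= eqxx.
Qed.

Section LineGraphBlowup.
Variables (V E : finType) (ends : E -> V * V) (t n : nat).
Local Notation m := n.+1.
Variables (phi : 'I_t -> E) (P : 'I_t -> 'I_t -> seq E).
Hypothesis phi_inj : injective phi.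
Hypothesis P_path : forall u v : 'I_t, u < v ->
  is_path (line_adj ends) (phi u) (phi v) (P u v).
Hypothesis P_disjoint : forall u v u' v' : 'I_t, u < v -> u' < v' ->
  (u, v) != (u', v') -> edge_disjoint (phi u) (P u v) (phi u') (P u' v').

Lemma size_P_gt0 (u v : 'I_t) : u < v -> 0 < size (P u v).
Proof.
move=> lt_uv; have [_ last_P _] := P_path lt_uv.
by case: (P u v) last_P => //= /phi_inj eq_uv; rewrite eq_uv ltnn in lt_uv.
Qed.

Fact block_subproof (w : 'I_(m * t)) : w %/ m < t.
Proof. by rewrite ltn_divLR // [t * _]mulnC. Qed.

Definition block (w : 'I_(m * t)) : 'I_t := Ordinal (block_subproof w).
Definition copy (w : 'I_(m * t)) : 'I_m := Ordinal (ltn_pmod w (ltn0Sn n)).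

Lemma block_copy_inj w w' : block w = block w' -> copy w = copy w' -> w = w'.
Proof.
move=> /(congr1 val) /= eq_div /(congr1 val) /= eq_mod; apply: ord_inj.
by rewrite [LHS](divn_eq _ m) [RHS](divn_eq _ m) eq_div eq_mod.
Qed.

Lemma block_lt (w w' : 'I_(m * t)) :
  w < w' -> block w != block w' -> block w < block w'.
Proof.
by move=> /ltnW /(leq_div2r m) le_div ne_blk; rewrite ltn_neqAle le_div andbT.
Qed.

Definition phi_mult (w : 'I_(m * t)) : E * 'I_m := (phi (block w), copy w).

Definition P_mult (w w' : 'I_(m * t)) : seq (E * 'I_m) :=
  if block w == block w' then [:: phi_mult w']
  else label_path (phi (block w)) (P (block w) (block w'))
         (alternating_label (size (P (block w) (block w'))) (copy w) (copy w')).

Lemma phi_mult_inj : injective phi_mult.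
Proof.
by move=> w w' [/phi_inj eq_blk eq_cp]; apply: (block_copy_inj eq_blk); apply: val_inj.
Qed.

Lemma P_mult_path (w w' : 'I_(m * t)) : w < w' ->
  is_path (line_adj (mult_ends m ends)) (phi_mult w) (phi_mult w') (P_mult w w').
Proof.
move=> lt_ww'; have ne_ww' : w != w' by rewrite neq_ltn lt_ww'.
rewrite /P_mult; case: eqVneq => [eq_blk | ne_blk].
  have ne_cp : copy w != copy w'.
    by apply: contra ne_ww' => /eqP /(block_copy_inj eq_blk) ->.
  split; rewrite /= ?andbT //; first by rewrite /phi_mult eq_blk line_adj_copies.
  by rewrite inE (inj_eq phi_mult_inj).
have lt_blk := block_lt lt_ww' ne_blk.
have := label_path_is_path (alternating_label (size (P (block w) (block w')))
  (copy w) (copy w')) (@line_adj_mult _ _ ends m) (P_path lt_blk).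
by rewrite alternating_label_last // size_P_gt0.
Qed.

Lemma P_mult_step_block (w w' : 'I_(m * t)) s : w < w' ->
  s \in path_steps (phi_mult w) (P_mult w w') ->
  (s.1.1 == s.2.1) = (block w == block w').
Proof.
rewrite /P_mult; case: eqVneq => [eq_blk | ne_blk] lt_ww'.
  by rewrite /path_steps /= inE => /eqP -> /=; rewrite eq_blk eqxx.
move=> /label_path_steps_fst s_in; apply: negbTE (path_steps_neq _ s_in).
by have [_ _ ->] := P_path (block_lt lt_ww' ne_blk).
Qed.

Lemma P_mult_same_edge (w1 w2 w3 w4 : 'I_(m * t)) s s' : w1 < w2 -> w3 < w4 ->
  s \in path_steps (phi_mult w1) (P_mult w1 w2) ->
  s' \in path_steps (phi_mult w3) (P_mult w3 w4) -> same_edge s s' ->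
  (w1, w2) = (w3, w4).
Proof.
move=> lt12 lt34 s_in s'_in ss'.
have := same_edge_eq (same_edge_map fst ss').
rewrite (P_mult_step_block lt12 s_in) (P_mult_step_block lt34 s'_in).
move: s_in s'_in; rewrite /P_mult.
case: eqVneq => [eq12 | ne12]; case: eqVneq => [eq34 | ne34] //= s_in s'_in _.
  move: s_in s'_in; rewrite /path_steps /= !inE => /eqP s_eq /eqP s'_eq.
  move: ss'; rewrite s_eq s'_eq.
  case=> /pair_equal_spec[/phi_mult_inj eq31 /phi_mult_inj eq42].
    by rewrite eq31 eq42.
  by move: lt12 lt34; rewrite eq31 eq42; lia.
have lt_blk12 := block_lt lt12 ne12; have lt_blk34 := block_lt lt34 ne34.
case: (eqVneq (block w1, block w2) (block w3, block w4)).
  case/pair_equal_spec=> eq13 eq24.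
  rewrite /phi_mult -eq13 -eq24 in s'_in; have [_ _ uniq_P] := P_path lt_blk12.
  have [l lt_l [eq_l eq_lS]] := label_path_same_edge uniq_P s_in s'_in ss'.
  have [cp13 cp24] := alternating_label_inj lt_l eq_l eq_lS.
  by rewrite (block_copy_inj eq13 cp13) (block_copy_inj eq24 cp24).
move=> ne_blk; have /edge_disjointE disj := P_disjoint lt_blk12 lt_blk34 ne_blk.
by case: (disj _ _ (label_path_steps_fst s_in) (label_path_steps_fst s'_in));
  apply: same_edge_map ss'.
Qed.

Lemma P_mult_disjoint (w1 w2 w3 w4 : 'I_(m * t)) : w1 < w2 -> w3 < w4 ->
  (w1, w2) != (w3, w4) ->
  edge_disjoint (phi_mult w1) (P_mult w1 w2) (phi_mult w3) (P_mult w3 w4).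
Proof.
move=> lt12 lt34 /eqP ne; apply/edge_disjointE => s s' s_in s'_in ss'.
exact/ne/(P_mult_same_edge lt12 lt34 s_in s'_in ss').
Qed.

Lemma line_mult_immersion : has_K_immersion (line_adj (mult_ends m ends)) (m * t).
Proof.
exists phi_mult; split; first exact: phi_mult_inj.
by exists P_mult; split; [apply: P_mult_path | apply: P_mult_disjoint].
Qed.

End LineGraphBlowup.

Lemma has_K_immersion_line_mult (V E : finType) (ends : E -> V * V) (t m : nat) :
  0 < m -> has_K_immersion (line_adj ends) t ->
  has_K_immersion (line_adj (mult_ends m ends)) (m * t).
Proof.
case: m => // n _ [phi [phi_inj [P [P_path P_disjoint]]]].
exact: line_mult_immersion phi_inj P_path P_disjoint.
Qed.

Theorem theorem1p2 (V E : finType) (ends : E -> V * V) (t : nat) :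
  loopless ends ->
  has_K_immersion (line_adj ends) t ->
  forall m : nat, 2 <= m ->
    has_K_immersion (line_adj (mult_ends m ends)) (m * t).
Proof.
by move=> _ immersion m /ltnW m_gt0; apply: has_K_immersion_line_mult m_gt0 immersion.
Qed.
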